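(* Fix $0<\eta<1$ and constants $A_\eta,a_\eta>0$. Let $D\ge 2$, let $0<\delta\le D$, let $\kappa\in\mathbb{Z}_{\ge0}$, and put $\xi_0=\frac{2\kappa+1}{4\delta}$. Let $\Phi\in C^\infty(\mathbb{R})$ be supported in $[-D/2,D/2]$ with $\|\Phi\|_{L^2(\mathbb{R})}=1$, and assume that for all $\xi\in\mathbb{R}$ $$ |\hat\Phi(\xi)|\le \delta^{1/2}A_\eta\Big(\exp\big(-a_\eta(\delta|\xi-\xi_0|)^{1-\eta}\big)+\exp\big(-a_\eta(\delta|\xi+\xi_0|)^{1-\eta}\big)\Big). $$ Then for every $n\in\mathbb{N}$ there exist positive constants $C_n,d_n,s_n$, depending only on $n,\eta,A_\eta,a_\eta$ (and not on $D,\delta,\kappa,\Phi$), such that for all $\xi$ with $|\xi|>\xi_0$, $$ |\hat\Phi^{(n)}(\xi)|\le C_nD^{d_n}\Big(\exp\big(-s_n(\delta|\xi-\xi_0|)^{1-\eta}\big)+\exp\big(-s_n(\delta|\xi+\xi_0|)^{1-\eta}\big)\Big). $$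
   Context: The Fourier transform is $\hat \Phi(\xi)=\int_{\mathbb{R}} \Phi(x)e^{-2\pi i x\xi}\,dx$, and $\hat\Phi^{(n)}$ denotes its $n$-th derivative. *)

From Stdlib Require Import Reals.
From Coquelicot Require Import Coquelicot.
Open Scope R_scope.

Definition smooth_C (f : R -> C) : Prop :=
  forall (n : nat) (x : R),
    ex_derive_n (fun t => Re (f t)) n x /\ ex_derive_n (fun t => Im (f t)) n x.

Definition expmi (theta : R) : C := (cos theta, - sin theta).

Definition fourier (f : R -> C) (xi : R) : C :=
  @RInt_gen C_R_CompleteNormedModule
    (fun x => Cmult (f x) (expmi (2 * PI * x * xi)))
    (Rbar_locally m_infty) (Rbar_locally p_infty).

Definition Derive_n_C (g : R -> C) (n : nat) (x : R) : C :=
  (Derive_n (fun t => Re (g t)) n x, Derive_n (fun t => Im (g t)) n x).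

Definition L2_norm_one (f : R -> C) : Prop :=
  @is_RInt_gen R_NormedModule (fun x => (Cmod (f x)) ^ 2)
    (Rbar_locally m_infty) (Rbar_locally p_infty) 1.

(* Real power x^y for x >= 0, with the convention 0^y = 0 (y > 0);
   Stdlib's Rpower would give 0^y = 1. *)
Definition rpow (x y : R) : R :=
  match Rle_dec x 0 with left _ => 0 | right _ => Rpower x y end.

From Stdlib Require Import Reals Lra Lia.
From Coquelicot Require Import Coquelicot.
Open Scope R_scope.

(* Write F = \hat Phi.  Since Phi is supported in
   [-L, L] with L = D/2 and has L^2 norm 1, every derivative of F is the
   integral of (-2 pi i x)^k Phi(x) e^{-2 pi i x xi} over [-L, L], so
   |F^(k)| <= (2 pi L)^k (2L + 1) uniformly.  An interpolation inequality
   based on n-th finite differences with step h,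
        |g^(n)(xi)| <= 2^n B / h^n + n h sup|g^(n+1)|,
   (B a bound for |g| on [xi, xi + n h]) transfers the decay of F to F^(n).
   Choosing h ~ E^{1/(n+1)} / D, where E is the decay profile at xi, makes
   both terms of size D^{n+1} E^{1/(n+1)}, and the root of the profile is
   bounded by the same profile with rate a/(n+1), by subadditivity of
   t |-> t^q for q <= 1. *)

Lemma exp_le_mono x y : x <= y -> exp x <= exp y.
Proof.
  intros H. destruct (Req_dec x y) as [E|E].
  - subst; lra.
  - left; apply exp_increasing; lra.
Qed.

Lemma Rpower_pos x q : 0 < Rpower x q.
Proof. unfold Rpower. apply exp_pos. Qed.

Lemma Rpower_root_pow x n : 0 < x -> Rpower x (/ INR (S n)) ^ S n = x.
Proof.
  intros Hx. rewrite <- Rpower_pow by apply Rpower_pos.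
  rewrite Rpower_mult, Rinv_l by (apply not_0_INR; discriminate).
  apply Rpower_1; exact Hx.
Qed.

Lemma Rpower_ge_self t q : 0 < t <= 1 -> 0 < q <= 1 -> t <= Rpower t q.
Proof.
  intros Ht Hq. unfold Rpower.
  rewrite <- (exp_ln t) at 1 by lra.
  assert (ln t <= 0) by (rewrite <- ln_1; apply ln_le; lra).
  apply exp_le_mono. nra.
Qed.

Lemma Rpower_subadd x y q : 0 < x -> 0 < y -> 0 < q <= 1 ->
  Rpower (x + y) q <= Rpower x q + Rpower y q.
Proof.
  intros Hx Hy Hq. set (s := x + y).
  assert (Hs : 0 < s) by (unfold s; lra).
  assert (Hscale : forall z, 0 < z -> Rpower z q = Rpower s q * Rpower (z / s) q).
  { intros z Hz. rewrite Rpower_mult_distr by (try apply Rdiv_lt_0_compat; lra).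
    f_equal. field; lra. }
  assert (Hself : forall z, 0 < z <= s -> z / s <= Rpower (z / s) q).
  { intros z Hz. apply Rpower_ge_self; [|exact Hq]. split.
    - apply Rdiv_lt_0_compat; lra.
    - apply Rmult_le_reg_r with s; [lra|]. field_simplify; lra. }
  assert (Hsum : x / s + y / s = 1) by (unfold s; field; lra).
  pose proof (Hself x ltac:(unfold s; lra)). pose proof (Hself y ltac:(unfold s; lra)).
  rewrite (Hscale x Hx), (Hscale y Hy). pose proof (Rpower_pos s q).
  nra.
Qed.

Lemma rpow_nonneg x p : 0 <= rpow x p.
Proof. unfold rpow. destruct (Rle_dec x 0); [lra | left; apply Rpower_pos]. Qed.

Lemma rpow_mono x y p : 0 <= p -> 0 <= x <= y -> rpow x p <= rpow y p.
Proof.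
  intros Hp Hxy. unfold rpow.
  destruct (Rle_dec x 0), (Rle_dec y 0); try lra.
  - left; apply Rpower_pos.
  - apply Rle_Rpower_l; lra.
Qed.

Lemma rpow_le_1 x p : 0 <= p -> x <= 1 -> rpow x p <= 1.
Proof.
  intros Hp Hx. unfold rpow. destruct (Rle_dec x 0); [lra|].
  unfold Rpower. rewrite <- exp_0. apply exp_le_mono.
  assert (ln x <= 0) by (rewrite <- ln_1; apply ln_le; lra).
  nra.
Qed.

Lemma rpow_subadd x y p : 0 < p <= 1 -> 0 <= x -> 0 <= y ->
  rpow (x + y) p <= rpow x p + rpow y p.
Proof.
  intros Hp Hx Hy.
  pose proof (rpow_nonneg 0 p).
  destruct (Req_dec x 0) as [->|Ex]; [rewrite Rplus_0_l; lra|].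
  destruct (Req_dec y 0) as [->|Ey]; [rewrite Rplus_0_r; lra|].
  unfold rpow.
  destruct (Rle_dec (x + y) 0), (Rle_dec x 0), (Rle_dec y 0); try lra.
  apply Rpower_subadd; lra.
Qed.

Definition decay (s p delta c xi : R) : R :=
  exp (- s * rpow (delta * Rabs (xi - c)) p)
  + exp (- s * rpow (delta * Rabs (xi + c)) p).

Lemma decay_pos s p delta c xi : 0 < decay s p delta c xi.
Proof.
  unfold decay.
  pose proof (exp_pos (- s * rpow (delta * Rabs (xi - c)) p)).
  pose proof (exp_pos (- s * rpow (delta * Rabs (xi + c)) p)). lra.
Qed.

Lemma decay_le_2 s p delta c xi : 0 <= s -> 0 <= delta -> decay s p delta c xi <= 2.
Proof.
  intros Hs Hd. unfold decay.
  assert (Hterm : forall u, exp (- s * rpow (delta * Rabs u) p) <= 1).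
  { intros u. rewrite <- exp_0. apply exp_le_mono.
    pose proof (rpow_nonneg (delta * Rabs u) p). nra. }
  pose proof (Hterm (xi - c)). pose proof (Hterm (xi + c)). lra.
Qed.

(* Moving the argument by at most 1/delta costs at most a factor e^a in
   exp(-a (delta|u|)^p), because (delta|.|)^p changes by at most 1. *)
Lemma decay_term_shift a p delta u v : 0 < a -> 0 < p <= 1 -> 0 < delta ->
  delta * Rabs (u - v) <= 1 ->
  exp (- a * rpow (delta * Rabs u) p) <= exp a * exp (- a * rpow (delta * Rabs v) p).
Proof.
  intros Ha Hp Hd Huv.
  assert (Hpow : rpow (delta * Rabs v) p <= rpow (delta * Rabs u) p + 1).
  { assert (Htri : delta * Rabs v <= delta * Rabs u + delta * Rabs (u - v)).
    { rewrite <- Rmult_plus_distr_l. apply Rmult_le_compat_l; [lra|].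
      replace v with (u + - (u - v)) at 1 by ring.
      rewrite <- (Rabs_Ropp (u - v)). apply Rabs_triang. }
    pose proof (Rabs_pos u). pose proof (Rabs_pos v). pose proof (Rabs_pos (u - v)).
    eapply Rle_trans; [apply rpow_mono; [lra | split; [nra | exact Htri]]|].
    eapply Rle_trans; [apply rpow_subadd; [exact Hp | nra | nra]|].
    pose proof (rpow_le_1 (delta * Rabs (u - v)) p). lra. }
  rewrite <- exp_plus. apply exp_le_mono. nra.
Qed.

Lemma decay_shift a p delta c xi t : 0 < a -> 0 < p <= 1 -> 0 < delta ->
  delta * Rabs (t - xi) <= 1 ->
  decay a p delta c t <= exp a * decay a p delta c xi.
Proof.
  intros Ha Hp Hd Ht. unfold decay. rewrite Rmult_plus_distr_l.
  apply Rplus_le_compat; apply decay_term_shift; auto.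
  - replace (t - c - (xi - c)) with (t - xi) by ring. exact Ht.
  - replace (t + c - (xi + c)) with (t - xi) by ring. exact Ht.
Qed.

Lemma decay_root s p delta c xi q : 0 < q <= 1 ->
  Rpower (decay s p delta c xi) q <= decay (q * s) p delta c xi.
Proof.
  intros Hq. unfold decay.
  eapply Rle_trans; [apply Rpower_subadd; auto; apply exp_pos|].
  unfold Rpower. rewrite !ln_exp. right. f_equal; f_equal; ring.
Qed.

Fixpoint diffh (h : R) (n : nat) (f : R -> R) : R -> R :=
  match n with O => f | S m => diffh h m (fun y => f (y + h) - f y) end.

Lemma diffh_bound h (Hh : 0 < h) : forall n f xi B,
  (forall t, xi <= t <= xi + INR n * h -> Rabs (f t) <= B) ->
  Rabs (diffh h n f xi) <= 2 ^ n * B.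
Proof.
  induction n as [|n IH]; intros f xi B HB.
  - simpl. rewrite Rmult_1_l. apply HB. simpl; lra.
  - simpl. replace (2 * 2 ^ n * B) with (2 ^ n * (2 * B)) by ring.
    apply IH. intros t Ht.
    rewrite S_INR in HB. pose proof (pos_INR n).
    assert (Rabs (f (t + h)) <= B) by (apply HB; nra).
    assert (Rabs (f t) <= B) by (apply HB; nra).
    unfold Rminus. eapply Rle_trans; [apply Rabs_triang|].
    rewrite Rabs_Ropp. lra.
Qed.

Lemma ex_derive_continuity_pt (f : R -> R) x : ex_derive f x -> continuity_pt f x.
Proof.
  intros [l Hl]. apply derivable_continuous_pt. exists l. apply is_derive_Reals. exact Hl.
Qed.

Lemma is_derive_shift (f : R -> R) h t l : is_derive f (t + h) l ->
  is_derive (fun y => f (y + h)) t l.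
Proof.
  intros H.
  assert (Hid : is_derive (fun y => y + h) t 1) by (auto_derive; [trivial | ring]).
  pose proof (is_derive_comp f (fun y => y + h) t l 1 H Hid) as Hc.
  replace l with (scal 1 l) by (unfold scal; simpl; unfold mult; simpl; ring). exact Hc.
Qed.

Lemma diffh_mvt h (Hh : 0 < h) : forall n (g : nat -> R -> R),
  (forall k t, is_derive (g k) t (g (S k) t)) ->
  forall xi, exists th, xi <= th <= xi + INR n * h /\
    diffh h n (g O) xi = h ^ n * g n th.
Proof.
  induction n as [|n IH]; intros g Hg xi.
  - exists xi. simpl. split; [lra | ring].
  - set (g' := fun k y => g k (y + h) - g k y).
    assert (Hg' : forall k t, is_derive (g' k) t (g' (S k) t)).
    { intros k t. apply (is_derive_minus (fun y => g k (y + h)) (g k)).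
      - apply is_derive_shift, Hg.
      - apply Hg. }
    destruct (IH g' Hg' xi) as [th1 [Hth1 Heq]].
    destruct (MVT_gen (g n) th1 (th1 + h) (g (S n))) as [c [Hc Hc2]].
    + intros x _. apply Hg.
    + intros x _. apply ex_derive_continuity_pt. eexists. apply Hg.
    + rewrite Rmin_left in Hc by lra. rewrite Rmax_right in Hc by lra.
      exists c. rewrite S_INR. split; [pose proof (pos_INR n); nra|].
      change (diffh h n (g' O) xi = h * h ^ n * g (S n) c).
      rewrite Heq. unfold g'. rewrite Hc2. ring.
Qed.

Lemma derivative_interpolation (g : nat -> R -> R) n xi h B M : 0 < h ->
  (forall k t, is_derive (g k) t (g (S k) t)) ->
  (forall t, xi <= t <= xi + INR n * h -> Rabs (g O t) <= B) ->
  (forall t, Rabs (g (S n) t) <= M) ->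
  Rabs (g n xi) <= 2 ^ n * B / h ^ n + INR n * h * M.
Proof.
  intros Hh Hg HB HM.
  destruct (diffh_mvt h Hh n g Hg xi) as [th [Hth Heq]].
  pose proof (diffh_bound h Hh n (g O) xi B HB) as Hd.
  rewrite Heq, Rabs_mult, (Rabs_right (h ^ n)) in Hd by (left; apply pow_lt; lra).
  assert (Hhn : 0 < h ^ n) by (apply pow_lt; lra).
  assert (Hat_th : Rabs (g n th) <= 2 ^ n * B / h ^ n).
  { apply (Rmult_le_reg_l (h ^ n)); [exact Hhn|].
    replace (h ^ n * (2 ^ n * B / h ^ n)) with (2 ^ n * B) by (field; lra). exact Hd. }
  assert (Hmove : Rabs (g n xi - g n th) <= INR n * h * M).
  { pose proof (pos_INR n). pose proof (Rle_trans _ _ _ (Rabs_pos _) (HM 0)).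
    destruct (Req_dec th xi) as [->|E].
    - rewrite Rminus_diag, Rabs_R0. nra.
    - destruct (MVT_gen (g n) xi th (g (S n))) as [c [_ Hc]].
      + intros x _. apply Hg.
      + intros x _. apply ex_derive_continuity_pt. eexists. apply Hg.
      + replace (g n xi - g n th) with (- (g n th - g n xi)) by ring.
        rewrite Rabs_Ropp, Hc, Rabs_mult.
        assert (Rabs (th - xi) <= INR n * h) by (rewrite Rabs_right; lra).
        pose proof (HM c). pose proof (Rabs_pos (g (S n) c)). pose proof (Rabs_pos (th - xi)).
        nra. }
  replace (g n xi) with (g n th + (g n xi - g n th)) by ring.
  eapply Rle_trans; [apply Rabs_triang | lra].
Qed.

(* Fourier transform of a function with real part U and imaginary part V,
   supported in [-L, L].  The k-th derivative in xi of the real part (phase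
   phi = 0) or imaginary part (phi = pi/2) is, after the phase shift
   phi + k pi/2, the integral over [-L, L] of  integrand U V phi k xi. *)
Definition integrand (U V : R -> R) (phi : R) (k : nat) (xi x : R) : R :=
  (2 * PI * x) ^ k * (U x * cos (2 * PI * x * xi + phi) + V x * sin (2 * PI * x * xi + phi)).

Definition Gk (U V : R -> R) (L phi : R) (k : nat) (xi : R) : R :=
  RInt (fun x => integrand U V phi k xi x) (-L) L.

Lemma continuity_2d_pt_snd f x y : continuity_2d_pt f x y -> continuity_pt (fun v => f x v) y.
Proof.
  intros H. apply continuity_pt_filterlim. intros P [eps HP].
  destruct (H eps) as [d Hd]. exists d. intros v Hv. apply HP.
  apply Hd; [rewrite Rminus_diag, Rabs_R0; apply cond_pos | exact Hv].
Qed.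

Lemma integrand_cont U V phi k xi x :
  (forall y, continuity_pt U y) -> (forall y, continuity_pt V y) ->
  continuity_2d_pt (integrand U V phi k) xi x.
Proof.
  intros HU HV. unfold integrand.
  assert (Harg : continuity_2d_pt (fun u v => 2 * PI * v * u + phi) xi x).
  { apply continuity_2d_pt_plus; [apply continuity_2d_pt_mult|apply continuity_2d_pt_const].
    - apply continuity_2d_pt_mult; [apply continuity_2d_pt_const | apply continuity_2d_pt_id2].
    - apply continuity_2d_pt_id1. }
  assert (Hsmooth : forall f : R -> R, (forall y, ex_derive f y) ->
            continuity_2d_pt (fun u v => f (2 * PI * v * u + phi)) xi x).
  { intros f Hf. apply (continuity_1d_2d_pt_comp f); [apply ex_derive_continuity_pt, Hf | exact Harg]. }
  apply continuity_2d_pt_mult.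
  - apply (continuity_1d_2d_pt_comp (fun v => (2 * PI * v) ^ k) (fun u v => v));
      [apply ex_derive_continuity_pt; auto_derive; trivial | apply continuity_2d_pt_id2].
  - apply continuity_2d_pt_plus; apply continuity_2d_pt_mult.
    + apply (continuity_1d_2d_pt_comp U (fun u v => v)); [apply HU | apply continuity_2d_pt_id2].
    + apply (Hsmooth cos). intros y. auto_derive. trivial.
    + apply (continuity_1d_2d_pt_comp V (fun u v => v)); [apply HV | apply continuity_2d_pt_id2].
    + apply (Hsmooth sin). intros y. auto_derive. trivial.
Qed.

Lemma integrand_derive U V phi k xi x :
  is_derive (fun z => integrand U V phi k z x) xi (integrand U V (phi + PI / 2) (S k) xi x).
Proof.
  unfold integrand. auto_derive; [trivial|].
  repeat rewrite ?cos_plus, ?sin_plus. rewrite cos_PI2, sin_PI2. simpl. ring.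
Qed.

Lemma integrand_ex_RInt U V phi k xi a b :
  (forall y, continuity_pt U y) -> (forall y, continuity_pt V y) ->
  ex_RInt (fun x => integrand U V phi k xi x) a b.
Proof.
  intros HU HV. apply (ex_RInt_continuous (V := R_CompleteNormedModule)). intros z _.
  apply continuity_pt_filterlim, (continuity_2d_pt_snd (integrand U V phi k)), integrand_cont; auto.
Qed.

(* Differentiation under the integral sign. *)
Lemma Gk_derive U V L phi k xi :
  (forall y, continuity_pt U y) -> (forall y, continuity_pt V y) ->
  is_derive (Gk U V L phi k) xi (Gk U V L (phi + PI / 2) (S k) xi).
Proof.
  intros HU HV. unfold Gk.
  rewrite (RInt_ext _ (fun x => Derive (fun u => integrand U V phi k u x) xi))
    by (intros x _; symmetry; apply is_derive_unique, integrand_derive).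
  apply (is_derive_RInt_param (fun u x => integrand U V phi k u x) (-L) L xi).
  - exists (mkposreal 1 Rlt_0_1). intros y _ x _. eexists. apply integrand_derive.
  - intros x _. apply (continuity_2d_pt_ext (integrand U V (phi + PI / 2) (S k))).
    + intros u v. symmetry. apply is_derive_unique, integrand_derive.
    + apply integrand_cont; auto.
  - exists (mkposreal 1 Rlt_0_1). intros y _. apply integrand_ex_RInt; auto.
Qed.

(* |u cos + v sin| <= 1 + (u^2 + v^2), which turns the L^2 normalisation
   into an L^1 bound on [-L, L]. *)
Lemma trig_combination_bound u v cs sn : -1 <= cs <= 1 -> -1 <= sn <= 1 ->
  Rabs (u * cs + v * sn) <= 1 + (u ^ 2 + v ^ 2).
Proof.
  intros Hc Hs. eapply Rle_trans; [apply Rabs_triang|].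
  rewrite !Rabs_mult.
  assert (Rabs cs <= 1) by (apply Rabs_le; lra).
  assert (Rabs sn <= 1) by (apply Rabs_le; lra).
  pose proof (Rabs_pos u). pose proof (Rabs_pos v).
  pose proof (Rabs_pos cs). pose proof (Rabs_pos sn).
  assert (Rabs u * Rabs u = u * u) by (rewrite <- Rabs_mult; apply Rabs_right; nra).
  assert (Rabs v * Rabs v = v * v) by (rewrite <- Rabs_mult; apply Rabs_right; nra).
  pose proof (pow2_ge_0 (Rabs u - 1)). pose proof (pow2_ge_0 (Rabs v - 1)).
  simpl. nra.
Qed.

Lemma Gk_bound U V L phi k xi : 0 <= L ->
  (forall y, continuity_pt U y) -> (forall y, continuity_pt V y) ->
  is_RInt (fun x => U x ^ 2 + V x ^ 2) (-L) L 1 ->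
  Rabs (Gk U V L phi k xi) <= (2 * PI * L) ^ k * (2 * L + 1).
Proof.
  intros HL HU HV HI. unfold Gk. pose proof PI_RGT_0.
  set (c := (2 * PI * L) ^ k).
  assert (Hc : 0 <= c) by (unfold c; apply pow_le; nra).
  assert (HJ : is_RInt (fun x => c * (1 + (U x ^ 2 + V x ^ 2))) (-L) L (c * (2 * L + 1))).
  { pose proof (is_RInt_plus _ _ (-L) L _ _ (is_RInt_const (V := R_NormedModule) (-L) L 1) HI) as H1.
    pose proof (is_RInt_scal _ (-L) L c _ H1) as H2.
    replace (c * (2 * L + 1)) with (scal c (plus (scal (L - - L) 1) 1)); [exact H2|].
    unfold scal, plus; simpl; unfold mult; simpl. ring. }
  eapply Rle_trans; [apply abs_RInt_le; [lra | apply integrand_ex_RInt; auto]|].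
  rewrite <- (is_RInt_unique _ _ _ _ HJ).
  apply RInt_le; [lra | apply ex_RInt_norm, integrand_ex_RInt; auto | eexists; exact HJ|].
  intros x Hx. unfold integrand. rewrite Rabs_mult.
  apply Rmult_le_compat; try apply Rabs_pos.
  - rewrite <- RPow_abs. unfold c. apply pow_incr. split; [apply Rabs_pos|].
    rewrite !Rabs_mult, (Rabs_right 2), (Rabs_right PI) by lra.
    assert (Rabs x <= L) by (apply Rabs_le; lra). nra.
  - apply trig_combination_bound; [apply COS_bound | apply SIN_bound].
Qed.

Lemma is_RInt_gen_of_compact {V : NormedModule R_AbsRing} (f : R -> V) l L :
  (forall a b, a < -L -> L < b -> is_RInt f a b l) ->
  is_RInt_gen f (Rbar_locally m_infty) (Rbar_locally p_infty) l.
Proof.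
  intros H P HP. unfold filtermapi.
  apply (Filter_prod _ _ _ (fun a => a < -L) (fun b => L < b)).
  - exists (-L). auto.
  - exists L. auto.
  - intros x y Hx Hy. exists l. split; [apply H; auto | apply locally_singleton, HP].
Qed.

Lemma is_RInt_supported (r : R -> R) L a b : 0 <= L -> a < -L -> L < b ->
  (forall y, continuity_pt r y) -> (forall x, L < Rabs x -> r x = 0) ->
  is_RInt r a b (RInt r (-L) L).
Proof.
  intros HL Ha Hb Hc Hs.
  assert (Hex : forall u v, ex_RInt r u v).
  { intros u v. apply (ex_RInt_continuous (V := R_CompleteNormedModule)). intros z _.
    apply continuity_pt_filterlim, Hc. }
  assert (Hzero : forall u v, u <= v -> (forall x, u < x < v -> L < Rabs x) ->
            RInt r u v = 0).
  { intros u v Huv Hout. rewrite (RInt_ext r (fun _ => 0)), RInt_const.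
    - unfold scal; simpl; unfold mult; simpl; ring.
    - intros x Hx. rewrite Rmin_left, Rmax_right in Hx by lra. apply Hs, Hout; lra. }
  replace (RInt r (-L) L) with (RInt r a b).
  - apply (RInt_correct (V := R_CompleteNormedModule)). auto.
  - rewrite <- (RInt_Chasles r a (-L) b), <- (RInt_Chasles r (-L) L b) by auto.
    rewrite (Hzero a (-L)), (Hzero L b); try lra.
    + unfold plus; simpl. ring.
    + intros x Hx. rewrite Rabs_right; lra.
    + intros x Hx. rewrite Rabs_left; lra.
Qed.

Lemma fourier_as_Gk (Phi : R -> C) L xi : 0 <= L ->
  (forall y, continuity_pt (fun t => fst (Phi t)) y) ->
  (forall y, continuity_pt (fun t => snd (Phi t)) y) ->
  (forall x, L < Rabs x -> Phi x = RtoC 0) ->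
  fourier Phi xi = (Gk (fun t => fst (Phi t)) (fun t => snd (Phi t)) L 0 0 xi,
                    Gk (fun t => fst (Phi t)) (fun t => snd (Phi t)) L (PI / 2) 0 xi).
Proof.
  intros HL HU HV Hs. unfold fourier. apply (is_RInt_gen_unique (V := C_R_CompleteNormedModule)).
  apply is_RInt_gen_of_compact with L. intros a b Ha Hb.
  assert (Hpart : forall phi, is_RInt (fun x => integrand (fun t => fst (Phi t))
              (fun t => snd (Phi t)) phi 0 xi x) a b
              (Gk (fun t => fst (Phi t)) (fun t => snd (Phi t)) L phi 0 xi)).
  { intros phi. apply is_RInt_supported; auto.
    - intros y. apply (continuity_2d_pt_snd (integrand _ _ phi 0)), integrand_cont; auto.
    - intros x Hx. unfold integrand. rewrite (Hs x Hx). simpl. ring. }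
  apply is_RInt_fct_extend_pair; (eapply is_RInt_ext; [|apply Hpart]); intros x _;
    unfold integrand, Cmult, expmi; simpl.
  - rewrite Rplus_0_r. ring.
  - rewrite cos_plus, sin_plus, cos_PI2, sin_PI2. ring.
Qed.

Lemma L2_norm_one_local (Phi : R -> C) L : 0 <= L ->
  (forall y, continuity_pt (fun t => fst (Phi t)) y) ->
  (forall y, continuity_pt (fun t => snd (Phi t)) y) ->
  (forall x, L < Rabs x -> Phi x = RtoC 0) ->
  L2_norm_one Phi ->
  is_RInt (fun x => fst (Phi x) ^ 2 + snd (Phi x) ^ 2) (-L) L 1.
Proof.
  intros HL HU HV Hs H2.
  set (r := fun x => fst (Phi x) ^ 2 + snd (Phi x) ^ 2).
  assert (Hr : forall x, Cmod (Phi x) ^ 2 = r x).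
  { intros x. unfold Cmod, r. apply pow2_sqrt.
    pose proof (pow2_ge_0 (fst (Phi x))). pose proof (pow2_ge_0 (snd (Phi x))). lra. }
  assert (Hc : forall y, continuity_pt r y).
  { intros y. unfold r. apply (continuity_pt_plus (fun x => fst (Phi x) ^ 2) (fun x => snd (Phi x) ^ 2));
      apply continuity_pt_comp with (f2 := fun z => z ^ 2); auto;
      apply ex_derive_continuity_pt; auto_derive; trivial. }
  assert (Hloc : is_RInt_gen r (Rbar_locally m_infty) (Rbar_locally p_infty) (RInt r (-L) L)).
  { apply is_RInt_gen_of_compact with L. intros a b Ha Hb. apply is_RInt_supported; auto.
    intros x Hx. unfold r. rewrite (Hs x Hx). simpl. ring. }
  assert (Hglob : is_RInt_gen r (Rbar_locally m_infty) (Rbar_locally p_infty) 1).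
  { eapply is_RInt_gen_ext; [| exact H2]. apply filter_forall. intros ab x _. apply Hr. }
  replace 1 with (RInt r (-L) L).
  - apply (RInt_correct (V := R_CompleteNormedModule)).
    apply (ex_RInt_continuous (V := R_CompleteNormedModule)). intros z _.
    apply continuity_pt_filterlim, Hc.
  - rewrite <- (is_RInt_gen_unique (V := R_CompleteNormedModule) _ _ Hloc).
    apply (is_RInt_gen_unique (V := R_CompleteNormedModule) _ _ Hglob).
Qed.

(* Interpolation inequality applied to the real/imaginary part G (phase phi0)
   of the Fourier transform: its chain of derivatives is G_k with phase
   phi0 + k pi/2, and G_{n+1} is bounded by Gk_bound. *)
Lemma Gk_derivative_bound U V L phi0 n xi h B :
  0 <= L -> 0 < h ->
  (forall y, continuity_pt U y) -> (forall y, continuity_pt V y) ->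
  is_RInt (fun x => U x ^ 2 + V x ^ 2) (-L) L 1 ->
  (forall t, xi <= t <= xi + INR n * h -> Rabs (Gk U V L phi0 0 t) <= B) ->
  Rabs (Derive_n (Gk U V L phi0 0) n xi) <=
    2 ^ n * B / h ^ n + INR n * h * ((2 * PI * L) ^ (S n) * (2 * L + 1)).
Proof.
  intros HL Hh HU HV HI HB.
  set (g := fun k t => Gk U V L (phi0 + INR k * (PI / 2)) k t).
  assert (Hg : forall k t, is_derive (g k) t (g (S k) t)).
  { intros k t. unfold g. rewrite S_INR, Rmult_plus_distr_r, Rmult_1_l, <- Rplus_assoc.
    apply Gk_derive; auto. }
  assert (Hg0 : forall t, g O t = Gk U V L phi0 0 t).
  { intros t. unfold g. simpl. rewrite Rmult_0_l, Rplus_0_r. reflexivity. }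
  assert (HD : forall m t, Derive_n (Gk U V L phi0 0) m t = g m t).
  { induction m as [|m IH]; intros t; simpl.
    - rewrite Hg0. reflexivity.
    - rewrite (Derive_ext _ (g m)) by apply IH. apply is_derive_unique, Hg. }
  rewrite HD. apply (derivative_interpolation g n xi h B _ Hh Hg).
  - intros t Ht. rewrite Hg0. apply HB, Ht.
  - intros t. unfold g. apply Gk_bound; assumption.
Qed.

Lemma Cmod_le_2max (z : C) b : Rabs (fst z) <= b -> Rabs (snd z) <= b -> Cmod z <= 2 * b.
Proof.
  intros H1 H2. eapply Rle_trans; [apply Cmod_2Rmax|].
  assert (Hm : Rmax (Rabs (fst z)) (Rabs (snd z)) <= b) by (apply Rmax_lub; auto).
  assert (Hs : sqrt 2 <= 2).
  { rewrite <- (sqrt_square 2) at 2 by lra. apply sqrt_le_1_alt. lra. }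
  pose proof (Rle_trans _ _ _ (Rabs_pos _) (Rmax_l (Rabs (fst z)) (Rabs (snd z)))).
  pose proof (sqrt_pos 2). apply Rmult_le_compat; lra.
Qed.

Lemma fourier_derivative_bound (Phi : R -> C) L n xi h B : 0 <= L -> 0 < h ->
  smooth_C Phi -> (forall x, L < Rabs x -> Phi x = RtoC 0) -> L2_norm_one Phi ->
  (forall t, xi <= t <= xi + INR n * h -> Cmod (fourier Phi t) <= B) ->
  Cmod (Derive_n_C (fourier Phi) n xi) <=
    2 * (2 ^ n * B / h ^ n + INR n * h * ((2 * PI * L) ^ (S n) * (2 * L + 1))).
Proof.
  intros HL Hh Hsm Hsupp HL2 HB.
  assert (HU : forall y, continuity_pt (fun t => fst (Phi t)) y)
    by (intros y; apply ex_derive_continuity_pt, (proj1 (Hsm 1%nat y))).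
  assert (HV : forall y, continuity_pt (fun t => snd (Phi t)) y)
    by (intros y; apply ex_derive_continuity_pt, (proj2 (Hsm 1%nat y))).
  pose proof (L2_norm_one_local Phi L HL HU HV Hsupp HL2) as HI.
  pose proof (fun t => fourier_as_Gk Phi L t HL HU HV Hsupp) as Hfe.
  unfold Derive_n_C. apply Cmod_le_2max; cbn [fst snd].
  - rewrite (Derive_n_ext _ (Gk _ _ L 0 0)) by (intros t; rewrite Hfe; reflexivity).
    apply Gk_derivative_bound; auto. intros t Ht.
    eapply Rle_trans; [| apply (HB t Ht)]. rewrite Hfe. apply (re_le_Cmod (_, _)).
  - rewrite (Derive_n_ext _ (Gk _ _ L (PI / 2) 0)) by (intros t; rewrite Hfe; reflexivity).
    apply Gk_derivative_bound; auto. intros t Ht.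
    eapply Rle_trans; [| apply (HB t Ht)]. rewrite Hfe.
    eapply Rle_trans; [apply Rmax_r | apply (Rmax_Cmod (_, _))].
Qed.

(* The choice of step h = P / (2 (n+1) D), with 0 < P <= 2: the stencil
   [xi, xi + n h] has length at most 1/delta. *)
Lemma stencil_short n D delta P xi t : 0 < delta <= D -> 0 < P <= 2 ->
  xi <= t <= xi + INR n * (P / (2 * INR (S n) * D)) -> delta * Rabs (t - xi) <= 1.
Proof.
  intros Hdel HP Ht. rewrite S_INR in *. pose proof (pos_INR n).
  rewrite Rabs_right by lra.
  assert (Hlen : D * (INR n * (P / (2 * (INR n + 1) * D))) = INR n * P / (2 * (INR n + 1)))
    by (field; lra).
  assert (Hfrac : INR n * P / (2 * (INR n + 1)) <= 1).
  { apply Rmult_le_reg_r with (2 * (INR n + 1)); [lra|].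
    unfold Rdiv. rewrite Rmult_assoc, Rinv_l by lra. nra. }
  assert (delta * (t - xi) <= D * (INR n * (P / (2 * (INR n + 1) * D))))
    by (apply Rmult_le_compat; lra).
  lra.
Qed.

Lemma difference_term_bound n A a D delta P : 0 < A -> 2 <= D -> 0 < delta <= D -> 0 < P ->
  2 ^ n * (sqrt delta * A * exp a * P ^ S n) / (P / (2 * INR (S n) * D)) ^ n
  <= 2 ^ n * A * exp a * (2 * INR (S n)) ^ n * D ^ S n * P.
Proof.
  intros HA HD Hdel HP. set (N := INR (S n)).
  assert (HN : 0 < N) by (apply lt_0_INR; lia).
  set (K := 2 ^ n * A * exp a * (2 * N) ^ n).
  assert (HK : 0 < K) by (unfold K; pose proof (exp_pos a);
    repeat apply Rmult_lt_0_compat; try apply pow_lt; lra).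
  assert (HDn : 0 < D ^ n) by (apply pow_lt; lra).
  assert (Hrewrite : 2 ^ n * (sqrt delta * A * exp a * P ^ S n) / (P / (2 * N * D)) ^ n
                     = K * sqrt delta * D ^ n * P).
  { unfold Rdiv, K. rewrite Rpow_mult_distr, pow_inv, !Rpow_mult_distr. simpl.
    field. repeat split; apply pow_nonzero; lra. }
  assert (Hsqrt : sqrt delta <= D).
  { apply Rle_trans with (sqrt D); [apply sqrt_le_1_alt; lra|].
    rewrite <- (sqrt_square D) at 2 by lra. apply sqrt_le_1_alt. nra. }
  rewrite Hrewrite. fold K.
  replace (K * D ^ S n * P) with (K * D ^ n * P * D) by (simpl; ring).
  replace (K * sqrt delta * D ^ n * P) with (K * D ^ n * P * sqrt delta) by ring.
  apply Rmult_le_compat_l; [|exact Hsqrt].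
  left. apply Rmult_lt_0_compat; [apply Rmult_lt_0_compat|]; assumption.
Qed.

Lemma remainder_term_bound n D P : 2 <= D -> 0 < P ->
  INR n * (P / (2 * INR (S n) * D)) * ((2 * PI * (D / 2)) ^ S n * (2 * (D / 2) + 1))
  <= 4 ^ S n * D ^ S n * P.
Proof.
  intros HD HP. pose proof (pos_INR n). pose proof PI_RGT_0. pose proof PI_4.
  assert (HDs : 0 < D ^ S n) by (apply pow_lt; lra).
  assert (Hpi : PI ^ S n <= 4 ^ S n) by (apply pow_incr; lra).
  assert (Hfactor : INR n * (D + 1) / (2 * INR (S n) * D) <= 1).
  { rewrite S_INR. apply Rmult_le_reg_r with (2 * (INR n + 1) * D); [nra|].
    unfold Rdiv. rewrite Rmult_assoc, Rinv_l by nra. nra. }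
  assert (Hfactor0 : 0 <= INR n * (D + 1) / (2 * INR (S n) * D)).
  { apply Rmult_le_pos; [nra|]. left. apply Rinv_0_lt_compat.
    assert (0 < INR (S n)) by (apply lt_0_INR; lia). nra. }
  replace (INR n * (P / (2 * INR (S n) * D)) * ((2 * PI * (D / 2)) ^ S n * (2 * (D / 2) + 1)))
    with ((INR n * (D + 1) / (2 * INR (S n) * D)) * (PI ^ S n * (D ^ S n * P))).
  2: { replace (2 * PI * (D / 2)) with (PI * D) by field. rewrite Rpow_mult_distr.
       field. split; [lra|]. apply not_0_INR. discriminate. }
  assert (0 < PI ^ S n * (D ^ S n * P)) by (apply Rmult_lt_0_compat; [apply pow_lt|]; nra).
  assert (PI ^ S n * (D ^ S n * P) <= 4 ^ S n * (D ^ S n * P))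
    by (apply Rmult_le_compat_r; nra).
  nra.
Qed.

Theorem corollary1 :
  forall (eta A a : R), 0 < eta < 1 -> 0 < A -> 0 < a ->
  forall n : nat,
  exists Cn dn sn : R, 0 < Cn /\ 0 < dn /\ 0 < sn /\
  forall (D delta : R) (kappa : nat) (Phi : R -> C),
    2 <= D -> 0 < delta <= D ->
    smooth_C Phi ->
    (forall x, D / 2 < Rabs x -> Phi x = RtoC 0) ->
    L2_norm_one Phi ->
    (let xi0 := (2 * INR kappa + 1) / (4 * delta) in
     (forall xi : R,
        Cmod (fourier Phi xi) <=
        sqrt delta * A *
          (exp (- a * rpow (delta * Rabs (xi - xi0)) (1 - eta))
           + exp (- a * rpow (delta * Rabs (xi + xi0)) (1 - eta)))) ->
     forall xi : R, xi0 < Rabs xi ->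
        Cmod (Derive_n_C (fourier Phi) n xi) <=
        Cn * Rpower D dn *
          (exp (- sn * rpow (delta * Rabs (xi - xi0)) (1 - eta))
           + exp (- sn * rpow (delta * Rabs (xi + xi0)) (1 - eta)))).
Proof.
  intros eta A a Heta HA Ha n.
  set (N := INR (S n)).
  assert (HN : 1 <= N) by (unfold N; rewrite S_INR; pose proof (pos_INR n); lra).
  set (K := 2 ^ n * A * exp a * (2 * N) ^ n).
  assert (HK : 0 < K) by (unfold K; pose proof (exp_pos a);
    repeat apply Rmult_lt_0_compat; try apply pow_lt; lra).
  assert (H4 : 0 < 4 ^ S n) by (apply pow_lt; lra).
  assert (Hq : 0 < / N <= 1) by (split; [apply Rinv_0_lt_compat | rewrite <- Rinv_1; apply Rinv_le_contravar]; lra).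
  exists (2 * (K + 4 ^ S n)), N, (/ N * a).
  split; [lra | split; [lra | split; [nra |]]].
  intros D delta kappa Phi HD Hdel Hsm Hsupp HL2 xi0 Hfour xi _.
  set (p := 1 - eta). assert (Hp : 0 < p <= 1) by (unfold p; lra).
  change (Cmod (Derive_n_C (fourier Phi) n xi) <=
          2 * (K + 4 ^ S n) * Rpower D N * decay (/ N * a) p delta xi0 xi).
  (* The step h is tuned to the (n+1)-th root P of the decay profile at xi. *)
  set (E := decay a p delta xi0 xi). set (P := Rpower E (/ N)).
  set (h := P / (2 * N * D)).
  assert (HP : P <= decay (/ N * a) p delta xi0 xi) by apply decay_root, Hq.
  assert (HP2 : 0 < P <= 2) by (split; [apply Rpower_pos | pose proof (decay_le_2 (/ N * a) p delta xi0 xi); nra]).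
  assert (Hh : 0 < h) by (unfold h; apply Rdiv_lt_0_compat; nra).
  assert (Hstencil : forall t, xi <= t <= xi + INR n * h ->
            Cmod (fourier Phi t) <= sqrt delta * A * exp a * P ^ S n).
  { intros t Ht. unfold P, N. rewrite Rpower_root_pow by apply decay_pos.
    eapply Rle_trans; [apply Hfour|].
    replace (sqrt delta * A * exp a * E) with (sqrt delta * A * (exp a * E)) by ring.
    apply Rmult_le_compat_l.
    - pose proof (sqrt_pos delta). nra.
    - apply decay_shift; try lra. apply (stencil_short n D delta P); auto. }
  pose proof (fourier_derivative_bound Phi (D / 2) n xi h _ ltac:(lra) Hh Hsm Hsupp HL2 Hstencil)
    as Hderiv.
  pose proof (difference_term_bound n A a D delta P HA HD Hdel (proj1 HP2)) as Hdiff.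
  pose proof (remainder_term_bound n D P HD (proj1 HP2)) as Hrem.
  fold N h in Hdiff, Hrem. fold K in Hdiff.
  unfold N. rewrite Rpower_pow by lra. fold N.
  assert (0 < D ^ S n) by (apply pow_lt; lra).
  apply Rle_trans with (2 * (K + 4 ^ S n) * D ^ S n * P); [lra|].
  apply Rmult_le_compat_l; [nra | exact HP].
Qed.
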